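(* For every $n\ge2$, within the space of real CPS tensors in $\mathbb{R}^{n\times n\times n\times n}$, one has the strict inclusions \[ \vec S^{n^2\times n^2}_+\subsetneq PSD^{4,n}_+\subsetneq \mathbb{R}CPS^{n^4}_+ . \] Moreover, already among real symmetric tensors, $\vec S^{n^2\times n^2}_+$ is a proper subset of $\mathbb{R}CPS^{n^4}_+$.
   Context: A real tensor $\mathcal{A}\in\mathbb{R}^{n\times n\times n\times n}$ is (real) CPS if $\mathcal{A}_{ijkl}=\mathcal{A}_{klij}=\mathcal{A}_{jikl}=\mathcal{A}_{ijlk}$ for all indices; symmetric if invariant under all index permutations. For a real CPS $\mathcal{A}$: $\mathcal{A}\in\mathbb{R}CPS^{n^4}_+$ iff $\sum_{ijkl}\mathcal{A}_{ijkl}x_ix_jx_kx_l\ge0$ for all $x\in\mathbb{R}^n$; $\mathcal{A}\in\vec S^{n^2\times n^2}_+$ (matrix PSD) iff $\sum_{ijkl}\mathcal{A}_{ijkl}X_{ij}X_{kl}\ge0$ for all real symmetric $X\in\mathbb{R}^{n\times n}$; $\mathcal{A}\in PSD^{4,n}_+$ (general PSD) iff $\sum_{ijkl}\mathcal{A}_{ijkl}X_{ij}X_{kl}\ge0$ for all real symmetric positive semidefinite $X\in\mathbb{R}^{n\times n}$. *)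

From HB Require Import structures.
From mathcomp Require Import all_boot all_order all_algebra perm.
From mathcomp Require Import reals.
Set Implicit Arguments. Unset Strict Implicit. Unset Printing Implicit Defensive.
Import Order.TTheory GRing.Theory Num.Theory.
Local Open Scope ring_scope.

Definition tensor4 (R : Type) (n : nat) := 'I_n -> 'I_n -> 'I_n -> 'I_n -> R.

Section Defs.
Variables (R : realType) (n : nat).
Implicit Types (A : tensor4 R n).

Definition is_CPS A : Prop :=
  forall i j k l, A i j k l = A k l i j /\ A i j k l = A j i k l /\ A i j k l = A i j l k.

Definition entry A (f : 'I_4 -> 'I_n) : R :=
  A (f (inord 0)) (f (inord 1)) (f (inord 2)) (f (inord 3)).

Definition is_symmetric_tensor A : Prop :=
  forall (s : {perm 'I_4}) (f : 'I_4 -> 'I_n), entry A (f \o s) = entry A f.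

Definition tform A (x : 'I_n -> R) : R :=
  \sum_(i < n) \sum_(j < n) \sum_(k < n) \sum_(l < n) A i j k l * x i * x j * x k * x l.

Definition mform A (X : 'M[R]_n) : R :=
  \sum_(i < n) \sum_(j < n) \sum_(k < n) \sum_(l < n) A i j k l * X i j * X k l.

Definition sym_mx (X : 'M[R]_n) : Prop := X^T = X.

Definition psd_mx (X : 'M[R]_n) : Prop :=
  sym_mx X /\ forall v : 'cV[R]_n, 0 <= (v^T *m X *m v) ord0 ord0.

Definition in_RCPS_plus A : Prop := is_CPS A /\ forall x, 0 <= tform A x.
(* vec S^{n^2 x n^2}_+ (matrix PSD) *)
Definition in_matPSD A : Prop := is_CPS A /\ forall X, sym_mx X -> 0 <= mform A X.
(* PSD^{4,n}_+ (general PSD) *)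
Definition in_genPSD A : Prop := is_CPS A /\ forall X, psd_mx X -> 0 <= mform A X.

End Defs.

From HB Require Import structures.
From mathcomp Require Import all_boot all_order all_algebra perm.
From mathcomp Require Import reals ring lra.
Import Order.TTheory GRing.Theory Num.Theory.
Set Implicit Arguments. Unset Strict Implicit. Unset Printing Implicit Defensive.
Local Open Scope ring_scope.

(* The inclusions hold because PSD matrices are symmetric and because
   [tform A x = mform A (x x^T)] with [x x^T] PSD.  All three separating
   tensors live on two coordinates p, q and are sums of rank-one tensors:
   - [e_p e_p e_q e_q + e_q e_q e_p e_p] has matrix form [2 X_pp X_qq], which is
     nonnegative on PSD matrices but equals -2 at the indefinite [diag(1, -1)];
   - [(e_p e_q + e_q e_p) (e_p e_q + e_q e_p) - 2 (e_p e_p e_q e_q + e_q e_q e_p e_p)]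
     has quartic form identically 0, but on symmetric X its matrix form is
     -4 times the determinant of the (p, q) block, which is -4 at the identity;
   - [(e_p + e_q)^4 + (e_p - e_q)^4 - 2 e_p^4 - 2 e_q^4] is fully symmetric with
     quartic form [12 x_p^2 x_q^2], but it is -4 at [diag(1, -1)]. *)

Section Forms.
Variables (R : realType) (n : nat).
Implicit Types (A B : tensor4 R n) (g h : 'I_n -> R) (x : 'I_n -> R) (X : 'M[R]_n).

Definition outer4 (g1 g2 g3 g4 : 'I_n -> R) : tensor4 R n :=
  fun i j k l => g1 i * g2 j * g3 k * g4 l.

Definition linf g x : R := \sum_i g i * x i.

Definition bilf g h X : R := \sum_i g i * \sum_j h j * X i j.

Lemma mform_outer4 g1 g2 g3 g4 X :
  mform (outer4 g1 g2 g3 g4) X = bilf g1 g2 X * bilf g3 g4 X.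
Proof.
rewrite /mform /bilf big_distrl; apply: eq_bigr => i _ /=.
rewrite (big_distrr (g1 i)) big_distrl; apply: eq_bigr => j _ /=.
rewrite big_distrr; apply: eq_bigr => k _ /=.
rewrite (big_distrr (g3 k)) big_distrr; apply: eq_bigr => l _ /=.
by rewrite /outer4; ring.
Qed.

Lemma tform_outer4 g1 g2 g3 g4 x :
  tform (outer4 g1 g2 g3 g4) x = linf g1 x * linf g2 x * linf g3 x * linf g4 x.
Proof.
rewrite /tform /linf -!mulrA big_distrl; apply: eq_bigr => i _ /=.
rewrite big_distrl (big_distrr (g1 i * x i)); apply: eq_bigr => j _ /=.
rewrite big_distrl mulrA big_distrr; apply: eq_bigr => k _ /=.
rewrite (big_distrr (g3 k * x k)) big_distrr; apply: eq_bigr => l _ /=.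
by rewrite /outer4; ring.
Qed.

Lemma mformD A B X :
  mform (fun i j k l => A i j k l + B i j k l) X = mform A X + mform B X.
Proof.
rewrite /mform -big_split; apply: eq_bigr => i _ /=; rewrite -big_split.
apply: eq_bigr => j _ /=; rewrite -big_split; apply: eq_bigr => k _ /=.
by rewrite -big_split; apply: eq_bigr => l _ /=; ring.
Qed.

Lemma mformZ (c : R) A X :
  mform (fun i j k l => c * A i j k l) X = c * mform A X.
Proof.
rewrite /mform big_distrr; apply: eq_bigr => i _ /=; rewrite big_distrr.
apply: eq_bigr => j _ /=; rewrite big_distrr; apply: eq_bigr => k _ /=.
by rewrite big_distrr; apply: eq_bigr => l _ /=; ring.
Qed.

Lemma tformD A B x :
  tform (fun i j k l => A i j k l + B i j k l) x = tform A x + tform B x.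
Proof.
rewrite /tform -big_split; apply: eq_bigr => i _ /=; rewrite -big_split.
apply: eq_bigr => j _ /=; rewrite -big_split; apply: eq_bigr => k _ /=.
by rewrite -big_split; apply: eq_bigr => l _ /=; ring.
Qed.

Lemma tformZ (c : R) A x :
  tform (fun i j k l => c * A i j k l) x = c * tform A x.
Proof.
rewrite /tform big_distrr; apply: eq_bigr => i _ /=; rewrite big_distrr.
apply: eq_bigr => j _ /=; rewrite big_distrr; apply: eq_bigr => k _ /=.
by rewrite big_distrr; apply: eq_bigr => l _ /=; ring.
Qed.

Definition outer_mx x : 'M[R]_n := \matrix_(i, j) (x i * x j).

Lemma tform_mform_outer A x : tform A x = mform A (outer_mx x).
Proof.
rewrite /tform /mform; apply: eq_bigr => i _; apply: eq_bigr => j _.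
by apply: eq_bigr => k _; apply: eq_bigr => l _; rewrite !mxE; ring.
Qed.

Lemma psd_mx_outer x : psd_mx (outer_mx x).
Proof.
split; first by apply/matrixP => i j; rewrite !mxE mulrC.
move=> v; have -> : (v^T *m outer_mx x *m v) ord0 ord0 = (\sum_i v i ord0 * x i) ^+ 2.
  rewrite mxE expr2 big_distrl; apply: eq_bigr => k _ /=.
  rewrite !mxE big_distrr big_distrl; apply: eq_bigr => l _ /=.
  by rewrite !mxE; ring.
exact: sqr_ge0.
Qed.

Lemma psd_mx1 : psd_mx (1%:M : 'M[R]_n).
Proof.
split=> [|v]; first by rewrite /sym_mx trmx1.
rewrite mulmx1 mxE; apply: sumr_ge0 => i _; rewrite !mxE -expr2.
exact: sqr_ge0.
Qed.

Lemma psd_mx_diag_ge0 X (a : 'I_n) : psd_mx X -> 0 <= X a a.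
Proof.
move=> [_ /(_ (delta_mx a 0))].
by rewrite trmx_delta -rowE -colE !mxE.
Qed.

Lemma matPSD_genPSD A : in_matPSD A -> in_genPSD A.
Proof. by move=> [hc hA]; split=> // X [hX _]; exact: hA. Qed.

Lemma genPSD_RCPS A : in_genPSD A -> in_RCPS_plus A.
Proof.
move=> [hc hA]; split=> // x.
by rewrite tform_mform_outer; apply: hA; exact: psd_mx_outer.
Qed.

Lemma entry_outer4_diag g (f : 'I_4 -> 'I_n) :
  entry (outer4 g g g g) f = \prod_k g (f k).
Proof.
rewrite /entry /outer4 !big_ord_recl big_ord0 mulr1 !mulrA.
have gf_val (a b : 'I_4) : val a = val b -> g (f a) = g (f b) by move/val_inj->.
rewrite (gf_val (inord 0) ord0); last by rewrite /= inordK.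
rewrite (gf_val (inord 1) (lift ord0 ord0)); last by rewrite /= inordK.
rewrite (gf_val (inord 2) (lift ord0 (lift ord0 ord0))); last by rewrite /= inordK.
by rewrite (gf_val (inord 3) (lift ord0 (lift ord0 (lift ord0 ord0)))) // /= inordK.
Qed.

Lemma is_symmetric_outer4 g : is_symmetric_tensor (outer4 g g g g).
Proof.
move=> s f; rewrite !entry_outer4_diag.
by rewrite [RHS](reindex_inj (@perm_inj _ s)).
Qed.

Lemma is_symmetric_tensorD A B :
  is_symmetric_tensor A -> is_symmetric_tensor B ->
  is_symmetric_tensor (fun i j k l => A i j k l + B i j k l).
Proof.
move=> hA hB s f.
have entryD (e : 'I_4 -> 'I_n) :
  entry (fun i j k l => A i j k l + B i j k l) e = entry A e + entry B e by [].
by rewrite !entryD hA hB.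
Qed.

Lemma is_symmetric_tensorZ (c : R) A :
  is_symmetric_tensor A -> is_symmetric_tensor (fun i j k l => c * A i j k l).
Proof.
move=> hA s f.
have entryZ (e : 'I_4 -> 'I_n) :
  entry (fun i j k l => c * A i j k l) e = c * entry A e by [].
by rewrite !entryZ hA.
Qed.

Lemma sum_delta (a : 'I_n) (F : 'I_n -> R) : \sum_i (i == a)%:R * F i = F a.
Proof.
rewrite (bigD1 a) //= eqxx mul1r big1 ?addr0 // => i /negbTE ->.
by rewrite mul0r.
Qed.

End Forms.

Section TwoCoordinates.
Variables (R : realType) (n : nat) (p q : 'I_n).
Hypothesis neq_pq : p != q.
Implicit Types (x : 'I_n -> R) (X : 'M[R]_n).

Definition coord2 (a b : R) : 'I_n -> R :=
  fun i => a * (i == p)%:R + b * (i == q)%:R.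

Lemma sum_coord2 (a b : R) (F : 'I_n -> R) :
  \sum_i coord2 a b i * F i = a * F p + b * F q.
Proof.
under eq_bigr => i _ do rewrite /coord2 mulrDl -!mulrA.
by rewrite big_split /= -!big_distrr /= !sum_delta.
Qed.

Definition signature_mx : 'M[R]_n :=
  diag_mx (\row_i ((i == p)%:R - (i == q)%:R)).

Lemma sym_signature_mx : sym_mx signature_mx.
Proof. exact: tr_diag_mx. Qed.

Lemma signature_mxE :
  [/\ signature_mx p p = 1, signature_mx q q = -1,
      signature_mx p q = 0 & signature_mx q p = 0].
Proof.
have nqp : q != p by rewrite eq_sym.
by rewrite !mxE !eqxx (negbTE neq_pq) (negbTE nqp) /= !mulr0n !subr0 !sub0r !mulr1n.
Qed.

Local Notation e_p := (coord2 1 0).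
Local Notation e_q := (coord2 0 1).

Definition diag_product_tensor : tensor4 R n :=
  fun i j k l => outer4 e_p e_p e_q e_q i j k l + outer4 e_q e_q e_p e_p i j k l.

Lemma mform_diag_product_tensor X :
  mform diag_product_tensor X = 2 * (X p p * X q q).
Proof. by rewrite mformD !mform_outer4 /bilf !sum_coord2; ring. Qed.

Lemma diag_product_tensor_genPSD : in_genPSD diag_product_tensor.
Proof.
split=> [i j k l|X hX]; first by rewrite /diag_product_tensor /outer4; split; [|split]; ring.
rewrite mform_diag_product_tensor.
by rewrite !mulr_ge0 // psd_mx_diag_ge0.
Qed.

Lemma diag_product_tensor_not_matPSD : ~ in_matPSD diag_product_tensor.
Proof.
move=> [_ /(_ _ sym_signature_mx)].
by case: signature_mxE => Epp Eqq _ _; rewrite mform_diag_product_tensor Epp Eqq; lra.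
Qed.

Definition null_quartic_tensor : tensor4 R n :=
  fun i j k l => outer4 e_p e_q e_p e_q i j k l + outer4 e_q e_p e_q e_p i j k l
    + outer4 e_p e_q e_q e_p i j k l + outer4 e_q e_p e_p e_q i j k l
    + (-2) * outer4 e_p e_p e_q e_q i j k l + (-2) * outer4 e_q e_q e_p e_p i j k l.

Lemma tform_null_quartic_tensor x : tform null_quartic_tensor x = 0.
Proof. by rewrite !tformD !tformZ !tform_outer4 /linf !sum_coord2; ring. Qed.

Lemma null_quartic_tensor_RCPS : in_RCPS_plus null_quartic_tensor.
Proof.
split=> [i j k l|x]; first by rewrite /null_quartic_tensor /outer4; split; [|split]; ring.
by rewrite tform_null_quartic_tensor.
Qed.

Lemma null_quartic_tensor_not_genPSD : ~ in_genPSD null_quartic_tensor.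
Proof.
have nqp : q != p by rewrite eq_sym.
move=> [_ /(_ _ (psd_mx1 R n))].
rewrite !mformD !mformZ !mform_outer4 /bilf !sum_coord2.
by rewrite !mxE !eqxx (negbTE neq_pq) (negbTE nqp) /=; lra.
Qed.

Local Notation splus := (coord2 1 1).
Local Notation sminus := (coord2 1 (-1)).

Definition symmetric_quartic_tensor : tensor4 R n :=
  fun i j k l => outer4 splus splus splus splus i j k l
    + outer4 sminus sminus sminus sminus i j k l
    + (-2) * outer4 e_p e_p e_p e_p i j k l + (-2) * outer4 e_q e_q e_q e_q i j k l.

Lemma symmetric_quartic_tensor_symmetric : is_symmetric_tensor symmetric_quartic_tensor.
Proof.
by do ![apply: is_symmetric_tensorD | apply: is_symmetric_tensorZ
       | apply: is_symmetric_outer4].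
Qed.

Lemma tform_symmetric_quartic_tensor x :
  tform symmetric_quartic_tensor x = 12 * (x p * x q) ^+ 2.
Proof. by rewrite !tformD !tformZ !tform_outer4 /linf !sum_coord2; ring. Qed.

Lemma symmetric_quartic_tensor_RCPS : in_RCPS_plus symmetric_quartic_tensor.
Proof.
split=> [i j k l|x].
  by rewrite /symmetric_quartic_tensor /outer4; split; [|split]; ring.
by rewrite tform_symmetric_quartic_tensor mulr_ge0 ?sqr_ge0.
Qed.

Lemma symmetric_quartic_tensor_not_matPSD : ~ in_matPSD symmetric_quartic_tensor.
Proof.
move=> [_ /(_ _ sym_signature_mx)].
rewrite !mformD !mformZ !mform_outer4 /bilf !sum_coord2.
by case: signature_mxE => -> -> -> ->; lra.
Qed.

End TwoCoordinates.

Theorem mainTheorem19 (R : realType) (n : nat) (hn : (2 <= n)%N) :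
  (forall A : tensor4 R n, in_matPSD A -> in_genPSD A) /\
  (forall A : tensor4 R n, in_genPSD A -> in_RCPS_plus A) /\
  (exists A : tensor4 R n, in_genPSD A /\ ~ in_matPSD A) /\
  (exists A : tensor4 R n, in_RCPS_plus A /\ ~ in_genPSD A) /\
  (exists A : tensor4 R n, is_symmetric_tensor A /\ in_RCPS_plus A /\ ~ in_matPSD A).
Proof.
pose p : 'I_n := Ordinal (ltnW hn); pose q : 'I_n := Ordinal hn.
have neq_pq : p != q by [].
split; first exact: matPSD_genPSD.
split; first exact: genPSD_RCPS.
split.
  exists (diag_product_tensor R p q); split.
    exact: diag_product_tensor_genPSD.
  exact: diag_product_tensor_not_matPSD.
split.
  exists (null_quartic_tensor R p q); split.
    exact: null_quartic_tensor_RCPS.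
  exact: null_quartic_tensor_not_genPSD.
exists (symmetric_quartic_tensor R p q); split.
  exact: symmetric_quartic_tensor_symmetric.
split; first exact: symmetric_quartic_tensor_RCPS.
exact: symmetric_quartic_tensor_not_matPSD.
Qed.
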